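(* Let $\pi_1, \ldots, \pi_k \geqslant 3$ be pairwise distinct integers. Then $\prod_{i=1}^k (2^{\pi_i}-2) \geqslant \frac{1}{2} \prod_{i=1}^k 2^{\pi_i}$. *)

From mathcomp Require Import all_boot all_order all_algebra.

(* Since 2^p - 2 = 2^p (1 - 2^(1-p)), it suffices that the product of the
   factors 1 - 2^(1-p) is at least 1/2.  By the Weierstrass product inequality
   prod (1 - x_i) >= 1 - sum x_i, and as the exponents are distinct and >= 3,
   sum 2^(1-p) <= sum_(p >= 3) 2^(1-p) = 1/2. *)
From mathcomp Require Import all_boot all_order all_algebra.
From mathcomp Require Import ring lra.
Import Order.TTheory GRing.Theory Num.Theory.
Local Open Scope ring_scope.

Lemma sub1_sum_le_prod (R : numDomainType) (I : eqType) (r : seq I) (F : I -> R) :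
  {in r, forall i, 0 <= F i <= 1} -> 1 - \sum_(i <- r) F i <= \prod_(i <- r) (1 - F i).
Proof.
elim: r => [|i r IHr] F01; first by rewrite !big_nil subr0.
have /andP[Fi_ge0 Fi_le1] := F01 i (mem_head i r).
have {}F01 : {in r, forall j, 0 <= F j <= 1} by move=> j jr; rewrite F01 ?inE ?jr ?orbT.
have sum_ge0 : 0 <= \sum_(j <- r) F j.
  by rewrite big_seq sumr_ge0 // => j /F01 /andP[].
rewrite !big_cons; apply: le_trans (ler_wpM2l _ (IHr F01)); last by rewrite subr_ge0.
have -> : (1 - F i) * (1 - \sum_(j <- r) F j)
          = 1 - (F i + \sum_(j <- r) F j) + F i * \sum_(j <- r) F j by ring.
by rewrite lerDl mulr_ge0.
Qed.

Lemma ler_sum_uniq_subset (R : numDomainType) (I : eqType) (s s' : seq I) (F : I -> R) :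
  uniq s -> uniq s' -> {subset s <= s'} -> (forall i, 0 <= F i) ->
  \sum_(i <- s) F i <= \sum_(i <- s') F i.
Proof.
move=> s_uniq s'_uniq ss' F_ge0.
rewrite [X in _ <= X](bigID (mem s)) /= -[X in _ <= X + _]big_filter.
have s_perm : perm_eq [seq i <- s' | i \in s] s.
  apply: uniq_perm; rewrite ?filter_uniq // => i; rewrite mem_filter.
  exact: andb_idr (ss' i).
by rewrite (perm_big _ s_perm) lerDl sumr_ge0.
Qed.

Lemma geometric_sum_le (R : realFieldType) (x : R) (n : nat) :
  0 <= x < 1 -> \sum_(i < n) x ^+ i <= (1 - x)^-1.
Proof.
case/andP=> x_ge0 x_lt1; have x1_gt0 : 0 < 1 - x by rewrite subr_gt0.
rewrite -(ler_pM2l x1_gt0) mulfV ?lt0r_neq0 //.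
have -> : (1 - x) * \sum_(i < n) x ^+ i = 1 - x ^+ n.
  by rewrite -opprB mulNr -subrX1 opprB.
by rewrite gerBl exprn_ge0.
Qed.

Lemma sum_expr_uniq_le (R : realFieldType) (x : R) (m : nat) (s : seq nat) :
  0 <= x < 1 -> uniq s -> all (fun p => m <= p)%N s ->
  \sum_(p <- s) x ^+ p <= x ^+ m * (1 - x)^-1.
Proof.
move=> /[dup] x01 /andP[x_ge0 _] s_uniq s_ge_m.
set n := (\max_(p <- s) p).+1.
have s_sub : {subset s <= iota m n}.
  move=> p ps; rewrite mem_iota (allP s_ge_m p ps) /= ltn_addl // ltnS.
  exact: leq_bigmax_seq.
apply: le_trans (ler_sum_uniq_subset _ _ _ _ (fun p => x ^+ p) s_uniq (iota_uniq m n) s_sub _) _.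
  by move=> p; rewrite exprn_ge0.
rewrite -[m]addn0 iotaDl big_map -[iota 0 n]/(index_iota 0 n) big_mkord addn0.
under eq_bigr do rewrite exprD.
by rewrite -mulr_sumr ler_wpM2l ?exprn_ge0 ?geometric_sum_le.
Qed.

(* The integers pi_1, ..., pi_k are the entries of the list s : seq nat
   (each >= 3, hence naturals), pairwise distinct = uniq s. *)
Theorem lemma7 (s : seq nat) (Hs : uniq s) (H3 : all (fun p => 3 <= p)%N s) :
  (\prod_(p <- s) (2 ^+ p - 2) : rat) >= (1 / 2) * \prod_(p <- s) (2 ^+ p).
Proof.
pose F p : rat := 2 * 2^-1 ^+ p.
have F01 : {in s, forall p, 0 <= F p <= 1}.
  move=> p /(allP H3) p_ge3; rewrite /F mulr_ge0 ?exprn_ge0 ?invr_ge0 ?ler0n //=.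
  have : (2^-1 : rat) ^+ p <= 2^-1 ^+ 1.
    by apply: ler_wiXn2l => //; apply: leq_trans p_ge3.
  rewrite expr1; lra.
have factor p : 2 ^+ p - 2 = 2 ^+ p * (1 - F p) :> rat.
  by rewrite /F mulrBr mulr1 mulrCA -exprMn mulfV ?expr1n ?mulr1.
have sumF : \sum_(p <- s) F p <= 2^-1.
  have half01 : 0 <= (2^-1 : rat) < 1 by [].
  rewrite /F -mulr_sumr.
  by apply: le_trans (ler_wpM2l _ (sum_expr_uniq_le _ _ _ _ half01 Hs H3)) _.
rewrite (eq_bigr _ (fun p _ => factor p)) big_split /= [X in _ <= X]mulrC; apply: ler_wpM2r.
  by apply: prodr_ge0 => p _; apply: exprn_ge0.
apply: le_trans (sub1_sum_le_prod _ _ _ _ F01); lra.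
Qed.
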